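(* Let $0<q<1$ and let $f,h$ satisfy $0<h\le f^q$. Then there exists a non-increasing continuous function $g:(0,1]\to\mathbb{R}^+$ such that $\int_0^1 g(u)\,du=f$, $\int_0^1 g^q(u)\,du=h$, and $$\frac1t\int_0^t g(u)\,du=\omega_q\Big(\frac{f^q}{h}\Big)^{1/q}g(t)\quad\text{for all }t\in(0,1].$$
   Context: Here $\omega_q(z)=[H_q^{-1}(z)]^q$ for $z\ge1$, where $H_q(z)=(1-q)z^q+qz^{q-1}$ on $[1,\infty)$ (a strictly increasing bijection onto $[1,\infty)$). *)

From HB Require Import structures.
From mathcomp Require Import all_boot all_order all_algebra.
From mathcomp Require Import all_classical all_reals all_analysis.
Set Implicit Arguments. Unset Strict Implicit. Unset Printing Implicit Defensive.
Import Order.TTheory GRing.Theory Num.Theory.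
Local Open Scope ring_scope.
Local Open Scope classical_set_scope.

Definition Hq {R : realType} (q z : R) : R :=
  (1 - q) * z `^ q + q * z `^ (q - 1).

(* H_q^{-1}(z): the (unique, for 0<q<1 and z>=1) w >= 1 with H_q(w) = z *)
Definition Hq_inv {R : realType} (q z : R) : R :=
  xget 1 [set w | 1 <= w /\ Hq q w = z].

Definition omega_q {R : realType} (q z : R) : R := Hq_inv q z `^ q.

From HB Require Import structures.
From mathcomp Require Import all_boot all_order all_algebra.
From mathcomp Require Import all_classical all_reals all_analysis.
From mathcomp Require Import measurable_realfun ring.
Set Implicit Arguments. Unset Strict Implicit. Unset Printing Implicit Defensive.
Import Order.TTheory GRing.Theory Num.Theory numFieldNormedType.Exports.
Local Open Scope ring_scope.
Local Open Scope classical_set_scope.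

(* With w := H_q^{-1}(f^q / h) >= 1 take the power g(u) = (f/w) u^(1/w - 1),
   nonincreasing since 1/w <= 1.  Its primitive on ]0, t] is f t^(1/w), i.e.
   w t g(t), which is the averaging identity because omega_q(f^q/h)^(1/q) = w,
   and gives the mass f at t = 1.  The mass of g^q is
   (f/w)^q / (q/w + 1 - q) = f^q w^(1-q) / ((1-q) w + q), which is exactly h
   since H_q(w) = w^(q-1) ((1-q) w + q). *)

Section power_integrals.
Variable R : realType.

Lemma continuous_powR (r x : R) : 0 < x -> {for x, continuous (@powR R ^~ r)}.
Proof.
move=> x0; apply: differentiable_continuous; apply/derivable1_diffP.
by apply: derivable_powR; rewrite in_itv/= andbT.
Qed.

Lemma le0_ger_powR (r x y : R) : r <= 0 -> 0 < x -> x <= y -> y `^ r <= x `^ r.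
Proof.
move=> r0 x0 xy; have y0 := lt_le_trans x0 xy.
have nonneg (z : R) : 0 < z -> z \is Num.nneg by move=> z0; rewrite nnegrE ltW.
have : x `^ (- r) <= y `^ (- r).
  by apply: (ge0_ler_powR _ (nonneg _ x0) (nonneg _ y0) xy); rewrite oppr_ge0.
by rewrite !powRN lef_pV2 // posrE powR_gt0.
Qed.

Lemma powR_subr1 (x r : R) : 0 < x -> x `^ (r - 1) = x `^ r / x.
Proof. by move=> x0; rewrite powRB ?powRr1 ?ltW // (gt_eqF x0) implybT. Qed.

Lemma is_derive_powR_primitive (b x : R) : b != 0 -> 0 < x ->
  is_derive x 1 (fun y => b^-1 * y `^ b) (x `^ (b - 1)).
Proof.
move=> b0 x0; have -> : x `^ (b - 1) = b^-1 * (b * x `^ (b - 1)).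
  by rewrite mulrA mulVf // mul1r.
exact/is_deriveZ/is_derive1_powR.
Qed.

Lemma integral_powR_cc (a t b : R) : 0 < a < t -> 0 < b ->
  (\int[lebesgue_measure]_(u in `[a, t]) (u `^ (b - 1))%:E
     = ((t `^ b - a `^ b) / b)%:E)%E.
Proof.
move=> /andP[a0 lt_at] b0; have bN0 : b != 0 by rewrite gt_eqF.
pose F y := b^-1 * y `^ b.
have F'y (y : R) : 0 < y -> is_derive y 1 F (y `^ (b - 1)).
  exact: is_derive_powR_primitive.
have Fc (y : R) : 0 < y -> {for y, continuous F}.
  move=> y0; apply: differentiable_continuous; apply/derivable1_diffP.
  by case: (F'y y y0).
rewrite (@continuous_FTC2 _ _ F) //.
- by rewrite -EFinB /F -mulrBr mulrC.
- apply: continuous_in_subspaceT => y; rewrite inE /= in_itv /= => /andP[ay _].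
  exact: continuous_powR (lt_le_trans a0 ay).
- split.
  + by move=> y; rewrite in_itv /= => /andP[ay _]; case: (F'y y (lt_trans a0 ay)).
  + exact/cvg_at_right_filter/Fc.
  + exact/cvg_at_left_filter/Fc/(lt_trans a0 lt_at).
- move=> y; rewrite in_itv /= => /andP[ay _].
  by rewrite derive1E; case: (F'y y (lt_trans a0 ay)) => _ ->.
Qed.

Lemma integral_powR_oc (b t : R) : 0 < b -> 0 < t ->
  (\int[lebesgue_measure]_(u in `]0%R, t]) (u `^ (b - 1))%:E = (t `^ b / b)%:E)%E.
Proof.
move=> b0 t0; pose I n := `[n.+1%:R^-1, t] : set R.
have -> : `]0, t] = \bigcup_n I n.
  by rewrite (itv_open_bnd_bigcup false); apply: eq_bigcupr => n _; rewrite add0r.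
have I_nd : nondecreasing_seq I.
  move=> m n mn; rewrite subsetEset => x; rewrite /I /= !in_itv/= => /andP[mx ->].
  by rewrite andbT (le_trans _ mx) // lef_pV2 ?posrE // ler_nat ltnS.
apply: (cvg_unique _ (ge0_nondecreasing_set_cvg_integral _ _ _ _)) => //=.
- by move=> n; exact: measurable_itv.
- by move=> n; apply/measurable_EFinP; apply: measurable_funTS; exact: measurable_powR.
- by move=> n x _; rewrite lee_fin powR_ge0.
have I_integral : \forall n \near \oo,
    ((t `^ b - n.+1%:R^-1 `^ b) / b)%:E
      = (\int[lebesgue_measure]_(u in I n) (u `^ (b - 1))%:E)%E.
  near=> n; rewrite integral_powR_cc // invr_gt0 ltr0n /=.
  by near: n; exact: (cvgr_lt 0 (@cvg_harmonic R)).
apply: cvg_trans (near_eq_cvg I_integral) _; apply: cvg_EFin; first exact: nearW.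
rewrite -[X in X / b]subr0; apply: cvgM; last exact: cvg_cst.
apply: cvgB; first exact: cvg_cst.
move/cvg_at_rightP: (powR_cvg0 b0) => /(_ harmonic); apply.
by split; [exact: harmonic_gt0 | exact: cvg_harmonic].
Unshelve. all: by end_near.
Qed.

Lemma integral_scaled_powR_oc (c b t : R) : 0 <= c -> 0 < b -> 0 < t ->
  (\int[lebesgue_measure]_(u in `]0%R, t]) (c * u `^ (b - 1))%:E
     = (c * (t `^ b / b))%:E)%E.
Proof.
move=> c0 b0 t0; under eq_integral do rewrite EFinM.
rewrite ge0_integralZl_EFin //= ?integral_powR_oc //.
- by move=> x _; rewrite lee_fin powR_ge0.
- apply/measurable_EFinP; apply: measurable_funTS; exact: measurable_powR.
Qed.

End power_integrals.

Section Hq_facts.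
Variable R : realType.
Implicit Types q w z : R.

Lemma Hq1 q : Hq q 1 = 1.
Proof. by rewrite /Hq !powR1 !mulr1 subrK. Qed.

Lemma continuous_Hq q z : 0 < z -> {for z, continuous (Hq q)}.
Proof.
move=> z0; apply: differentiable_continuous; apply/derivable1_diffP.
by apply: derivableD; apply: derivableM => //; apply: derivable_powR; rewrite in_itv/= andbT.
Qed.

Lemma Hq_factor q w : 0 < w -> Hq q w = w `^ (q - 1) * ((1 - q) * w + q).
Proof.
by move=> w0; rewrite /Hq powR_subr1 //; field; rewrite gt_eqF.
Qed.

Lemma Hq_ge_leading q w : 0 <= q -> (1 - q) * w `^ q <= Hq q w.
Proof. by move=> q0; rewrite /Hq lerDl mulr_ge0 ?powR_ge0. Qed.

Lemma Hq_inv_spec q z : 0 < q < 1 -> 1 <= z ->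
  1 <= Hq_inv q z /\ Hq q (Hq_inv q z) = z.
Proof.
move=> /andP[q0 q1] z1.
suff : exists w, 1 <= w /\ Hq q w = z by exact: xgetPex.
have q1' : 0 < 1 - q by rewrite subr_gt0.
have z0 : 0 <= z / (1 - q) by rewrite divr_ge0 ?ltW // (lt_le_trans ltr01).
pose M := Num.max 1 ((z / (1 - q)) `^ q^-1).
have M1 : 1 <= M by rewrite le_max lexx.
have zM : z <= Hq q M.
  apply: le_trans (Hq_ge_leading M (ltW q0)).
  rewrite -ler_pdivrMl // mulrC.
  have {1}-> : z / (1 - q) = ((z / (1 - q)) `^ q^-1) `^ q.
    by rewrite -powRrM mulVf ?gt_eqF // powRr1.
  apply: (@ge0_ler_powR R q (ltW q0)); rewrite ?nnegrE ?powR_ge0 //.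
    exact: le_trans ler01 M1.
  by rewrite le_max lexx orbT.
have cH : {within `[1, M], continuous (Hq q)}.
  apply: continuous_in_subspaceT => y; rewrite inE /= in_itv /= => /andP[y1 _].
  exact: continuous_Hq (lt_le_trans ltr01 y1).
have zH : Num.min (Hq q 1) (Hq q M) <= z <= Num.max (Hq q 1) (Hq q M).
  by rewrite ge_min le_max Hq1 z1 zM orbT.
have [w] := IVT M1 cH zH.
by rewrite in_itv /= => /andP[w1 _] Hw; exists w.
Qed.

Lemma Hq_profile_mass q w (f h : R) : 0 < w -> 0 < f -> 0 < h ->
  Hq q w = f `^ q / h -> (f / w) `^ q / ((w^-1 - 1) * q + 1) = h.
Proof.
move=> w0 f0 h0; rewrite Hq_factor //; set D := (1 - q) * w + q => Hw.
have : 0 < w `^ (q - 1) * D by rewrite Hw divr_gt0 ?powR_gt0.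
rewrite pmulr_rgt0 ?powR_gt0 // => D0.
have fq : f `^ q = h * (w `^ (q - 1) * D) by rewrite Hw mulrC divfK ?gt_eqF.
have wq : (w^-1) `^ q = (w `^ q)^-1.
  by rewrite -powR_inv1 ?ltW // -powRrM mulN1r powRN.
have -> : (w^-1 - 1) * q + 1 = D / w by rewrite /D; field; rewrite gt_eqF.
rewrite powRM ?ltW ?invr_gt0 // wq fq powR_subr1 //.
by field; rewrite !gt_eqF ?powR_gt0.
Qed.

End Hq_facts.

Section power_profile.
Variable R : realType.

Definition power_profile (c a u : R) : R := c * u `^ (a - 1).

Lemma power_profile_gt0 (c a u : R) : 0 < c -> 0 < u -> 0 < power_profile c a u.
Proof. by move=> c0 u0; rewrite mulr_gt0 ?powR_gt0. Qed.

Lemma power_profile_nonincreasing (c a x y : R) : 0 <= c -> a <= 1 -> 0 < x -> x <= y ->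
  power_profile c a y <= power_profile c a x.
Proof. by move=> c0 a1 x0 xy; rewrite ler_wpM2l // le0_ger_powR // subr_le0. Qed.

Lemma continuous_power_profile (c a u : R) : 0 < u ->
  {for u, continuous (power_profile c a)}.
Proof.
move=> u0; apply: differentiable_continuous; apply/derivable1_diffP.
by apply: derivableM => //; apply: derivable_powR; rewrite in_itv/= andbT.
Qed.

Lemma integral_power_profile (c a t : R) : 0 <= c -> 0 < a -> 0 < t ->
  (\int[lebesgue_measure]_(u in `]0%R, t]) (power_profile c a u)%:E
     = (t * (a^-1 * power_profile c a t))%:E)%E.
Proof.
move=> c0 a0 t0; rewrite integral_scaled_powR_oc // /power_profile.
by rewrite -(mulr_powRB1 (ltW t0) a0); congr EFin; ring.
Qed.

Lemma integral_powR_power_profile (c a r : R) : 0 <= c -> 0 < (a - 1) * r + 1 ->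
  (\int[lebesgue_measure]_(u in `]0%R, 1%R]) (power_profile c a u `^ r)%:E
     = (c `^ r / ((a - 1) * r + 1))%:E)%E.
Proof.
move=> c0 b0.
have pow_profile u : power_profile c a u `^ r = c `^ r * u `^ ((a - 1) * r + 1 - 1).
  by rewrite powRM ?powR_ge0 // -powRrM addrK.
under eq_integral do rewrite pow_profile.
by rewrite integral_scaled_powR_oc ?powR_ge0 // powR1 mul1r.
Qed.

End power_profile.

Theorem lemma4p1 (R : realType) (q f h : R) :
  0 < q < 1 -> 0 < f -> 0 < h -> h <= f `^ q ->
  exists g : R -> R,
    (forall t, t \in `]0, 1] -> 0 < g t) /\
    (forall x y, x \in `]0, 1] -> y \in `]0, 1] -> x <= y -> g y <= g x) /\
    {within `]0, 1]%classic, continuous g} /\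
    (\int[lebesgue_measure]_(u in `]0%R, 1%R]%classic) (g u)%:E = f%:E)%E /\
    (\int[lebesgue_measure]_(u in `]0%R, 1%R]%classic) (g u `^ q)%:E = h%:E)%E /\
    (forall t, t \in `]0, 1] ->
       (\int[lebesgue_measure]_(u in `]0%R, t]%classic) (g u)%:E
          = (t * (omega_q q (f `^ q / h) `^ q^-1 * g t))%:E)%E).
Proof.
move=> q01 f0 h0 hf; have /andP[q0 q1] := q01.
set w := Hq_inv q (f `^ q / h).
have [w1 Hw] : 1 <= w /\ Hq q w = f `^ q / h.
  by apply: Hq_inv_spec; rewrite // ler_pdivlMr // mul1r.
have w0 : 0 < w := lt_le_trans ltr01 w1.
have -> : omega_q q (f `^ q / h) `^ q^-1 = w.
  by rewrite /omega_q -powRrM mulfV ?gt_eqF // powRr1 // ltW.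
have a0 : 0 < w^-1 by rewrite invr_gt0.
have c0 : 0 < f / w by rewrite divr_gt0.
have oc01 (t : R) : t \in `]0, 1] -> 0 < t by rewrite inE /= in_itv => /andP[].
exists (power_profile (f / w) w^-1).
split; [|split; [|split; [|split; [|split]]]].
- by move=> t /oc01 t0; exact: power_profile_gt0.
- move=> x y /oc01 x0 _; apply: power_profile_nonincreasing => //; first exact: ltW.
  by rewrite invf_le1.
- apply: continuous_in_subspaceT => t /oc01 t0.
  exact: continuous_power_profile.
- rewrite integral_power_profile ?ltW // /power_profile powR1 invrK; congr EFin.
  by field; rewrite gt_eqF.
- have b0 : 0 < (w^-1 - 1) * q + 1.
    have -> : (w^-1 - 1) * q + 1 = w^-1 * q + (1 - q) by ring.
    by rewrite addr_gt0 ?mulr_gt0 // subr_gt0.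
  by rewrite integral_powR_power_profile ?(ltW c0) // (Hq_profile_mass w0 f0 h0 Hw).
- by move=> t /oc01 t0; rewrite integral_power_profile ?ltW // invrK.
Qed.
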